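(* Let $d$ be an even positive integer and $s$ a positive integer with $2s\leqslant d$. For every $\varepsilon,\gamma\in I^s\setminus\{\alpha,\omega\}$, $$ \mathrm{diam}(B_\varepsilon,B_\gamma)\leqslant\min\{d-s-\langle\varepsilon,\gamma\rangle,\ d-s-\langle\bar\varepsilon,\bar\gamma\rangle\}. $$
   Context: Let $I=\{0,1\}$; for binary vectors $|x|=\sum_i x_i$, $\langle x,y\rangle=\sum_i x_iy_i$, and $\bar x=(1-x_1,\ldots,1-x_n)$. For $x,y\in I^n$, $\mathrm{dist}(x,y)$ is the Hamming distance, and for $A,B\subseteq I^n$, $\mathrm{diam}(A,B)=\max\{\mathrm{dist}(a,b)\colon a\in A,b\in B\}$. Let $\alpha=(0,\ldots,0)$, $\omega=(1,\ldots,1)\in I^s$. For $\varepsilon\in I^s\setminus\{\alpha,\omega\}$ let $i=t(\varepsilon)$ be the unique index with $\varepsilon_i\neq\varepsilon_{i+1}=\cdots=\varepsilon_s$, and $A_\varepsilon=\{\varepsilon_1\}\times\cdots\times\{\varepsilon_i\}\times I^{s-1-i}\subseteq I^{s-1}$. Define subsets of $I^{d-s}$: $X_0=\{x\colon |x|\leqslant \frac d2-s\}$; $X_k=\{x\colon |x|=\frac d2-s+k\}$ for $0<k<s$; $X_s=\{x\colon |x|\geqslant \frac d2\}$. For $\varepsilon\in I^s\setminus\{\alpha,\omega\}$ set $B_\varepsilon=X_{|\varepsilon|}\cap(I^{d-2s+1}\times A_\varepsilon)$, where $I^{d-s}=I^{d-2s+1}\times I^{s-1}$. *)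

(* Binary vectors in I^n are n.-tuple bool (positions 0..n-1,
   i.e. paper index i corresponds to position i-1). *)
From mathcomp Require Import all_boot.
Set Implicit Arguments. Unset Strict Implicit. Unset Printing Implicit Defensive.

Definition weight n (x : n.-tuple bool) : nat := \sum_(i < n) nat_of_bool (tnth x i).
Definition inner n (x y : n.-tuple bool) : nat :=
  \sum_(i < n) nat_of_bool (tnth x i && tnth y i).
Definition compl n (x : n.-tuple bool) : n.-tuple bool := map_tuple negb x.
Definition dist n (x y : n.-tuple bool) : nat :=
  \sum_(i < n) nat_of_bool (tnth x i != tnth y i).
Definition diam n (A B : {set n.-tuple bool}) : nat :=
  \max_(a in A) \max_(b in B) dist a b.

Definition alpha s : s.-tuple bool := [tuple false | _ < s].
Definition omega s : s.-tuple bool := [tuple true | _ < s].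

(* t(eps): the (1-based) index i with eps_i <> eps_{i+1} = ... = eps_s,
   i.e. the largest 1-based position whose entry differs from eps_s. *)
Definition tidx s (e : s.-tuple bool) : nat :=
  \max_(j < s | tnth e j != nth false e s.-1) j.+1.

(* A_eps = {eps_1} x ... x {eps_i} x I^{s-1-i}, subset of I^{s-1} *)
Definition Aset s (e : s.-tuple bool) : {set (s.-1).-tuple bool} :=
  [set y : (s.-1).-tuple bool |
     [forall j : 'I_(s.-1), (j < tidx e) ==> (tnth y j == nth false e j)]].

Definition Xset d s k : {set (d - s).-tuple bool} :=
  [set x : (d - s).-tuple bool |
     if k == 0 then weight x <= d %/ 2 - s
     else if k < s then weight x == d %/ 2 - s + k
     else d %/ 2 <= weight x].

(* B_eps = X_{|eps|} cap (I^{d-2s+1} x A_eps), with I^{d-s} = I^{d-2s+1} x I^{s-1} *)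
Definition Bset d s (e : s.-tuple bool) : {set (d - s).-tuple bool} :=
  [set x in Xset d s (weight e) |
     [exists a in Aset e, drop (d - 2 * s + 1) x == val a]].
Arguments Bset d s e : clear implicits.
Arguments Xset d s k : clear implicits.

From mathcomp Require Import all_boot zify.
Set Implicit Arguments. Unset Strict Implicit.

(* Put n = d - s and a = d/2 - s, so that n = 2a + s, and take x in B_eps,
   y in B_gamma with t(eps) <= t(gamma).  As 0 < |eps| < s, |x| = a + |eps|
   and |y| = a + |gamma|.  If eps vanishes after position t(eps), then
   <eps,gamma> lives on the first t(eps) coordinates of the last block, where
   x and y copy eps and gamma, so <eps,gamma> <= <x,y>.  The identities
   dist x y + <x,y> + <bar x,bar y> = n and |x| + |y| = dist x y + 2<x,y>
   then give dist x y <= n - <eps,gamma> and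
   dist x y <= 2a + dist eps gamma <= n - <bar eps,bar gamma>. *)

Section BinaryVectors.
Variable n : nat.
Implicit Types x y : n.-tuple bool.

Lemma dist_sym x y : dist x y = dist y x.
Proof. by apply: eq_bigr => i _; rewrite eq_sym. Qed.

Lemma inner_sym x y : inner x y = inner y x.
Proof. by apply: eq_bigr => i _; rewrite andbC. Qed.

Lemma complK : involutive (@compl n).
Proof. by move=> x; apply: eq_from_tnth => i; rewrite !tnth_map negbK. Qed.

Lemma dist_compl x y : dist (compl x) (compl y) = dist x y.
Proof. by apply: eq_bigr => i _; rewrite !tnth_map; case: (tnth x i); case: (tnth y i). Qed.

Lemma dist_add_inner x y : dist x y + inner x y + inner (compl x) (compl y) = n.
Proof.
rewrite /dist /inner -!big_split (eq_bigr (fun=> 1)) ?sum_nat_const ?card_ord ?muln1 //.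
by move=> i _; rewrite !tnth_map; case: (tnth x i); case: (tnth y i).
Qed.

Lemma weightD x y : weight x + weight y = dist x y + 2 * inner x y.
Proof.
rewrite /weight /dist /inner big_distrr -!big_split; apply: eq_bigr => i _ /=.
by case: (tnth x i); case: (tnth y i).
Qed.

Lemma weight_compl x : weight (compl x) + weight x = n.
Proof.
rewrite /weight -big_split (eq_bigr (fun=> 1)) ?sum_nat_const ?card_ord ?muln1 //.
by move=> i _; rewrite tnth_map; case: (tnth x i).
Qed.

Lemma weight_eq0 x : weight x = 0 -> x = alpha n.
Proof.
move/eqP; rewrite sum_nat_eq0 => /forallP x0.
by apply: eq_from_tnth => i; rewrite /alpha tnth_mktuple; move: (x0 i); case: (tnth x i).
Qed.

Lemma compl_alpha : compl (alpha n) = omega n.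
Proof. by apply: eq_from_tnth => i; rewrite /alpha /omega !tnth_map. Qed.

Lemma weight_gt0 x : x != alpha n -> 0 < weight x.
Proof. by rewrite lt0n; apply: contra => /eqP /weight_eq0 ->. Qed.

Lemma weight_lt x : x != omega n -> weight x < n.
Proof.
rewrite -compl_alpha => ne_x.
have /weight_gt0 : compl x != alpha n by apply: contra ne_x => /eqP <-; rewrite complK.
by have := weight_compl x; lia.
Qed.

Lemma nth_compl x k : k < n -> nth false (compl x) k = ~~ nth false x k.
Proof. by move=> lt_k; rewrite (nth_map false) ?size_tuple. Qed.

Lemma inner_sum x y :
  inner x y = \sum_(0 <= t < n) (nth false x t && nth false y t).
Proof. by rewrite big_mkord; apply: eq_bigr => i _; rewrite !(tnth_nth false). Qed.

Lemma inner_ge_block x y m i : m + i <= n ->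
  \sum_(0 <= q < i) (nth false x (m + q) && nth false y (m + q)) <= inner x y.
Proof.
move=> le_mi; rewrite inner_sum; set F := fun t => nth false x t && nth false y t.
have -> : \sum_(0 <= q < i) F (m + q) = \sum_(m <= t < m + i) F t.
  by rewrite -{2}[m]add0n big_addn addKn; apply: eq_bigr => q _; rewrite addnC.
rewrite [X in _ <= X](big_cat_nat _ (n := m)) ?(leq_trans (leq_addr i m)) //=.
by rewrite [X in _ <= _ + X](big_cat_nat _ (n := m + i)) ?leq_addr //= addnCA leq_addr.
Qed.

End BinaryVectors.

Lemma inner_le_of_block n s m i (x y : n.-tuple bool) (e g : s.-tuple bool) :
  m + i <= n -> i <= s -> (forall q, i <= q < s -> nth false e q = false) ->
  (forall q, q < i -> nth false x (m + q) = nth false e q) ->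
  (forall q, q < i -> nth false y (m + q) = nth false g q) ->
  inner e g <= inner x y.
Proof.
move=> le_mi le_is e_tail x_blk y_blk; apply: leq_trans (inner_ge_block x y le_mi).
have tail0 : \sum_(i <= q < s) (nth false e q && nth false g q) = 0.
  by rewrite big_nat_cond big1 // => q /andP [/e_tail -> _].
rewrite inner_sum (big_cat_nat _ (n := i)) //= tail0 addn0 eq_leq //.
by apply: eq_big_nat => q /= lt_q; rewrite x_blk ?y_blk.
Qed.

Lemma dist_le_of_weights n s a (x y : n.-tuple bool) (e g : s.-tuple bool) :
  n = 2 * a + s -> weight x = a + weight e -> weight y = a + weight g ->
  inner e g <= inner x y ->
  dist x y <= minn (n - inner e g) (n - inner (compl e) (compl g)).
Proof.
move=> n_eq wx wy le_inner.
have := dist_add_inner x y; have := dist_add_inner e g.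
have := weightD x y; have := weightD e g; rewrite leq_min; lia.
Qed.

Lemma tidx_le s (e : s.-tuple bool) : tidx e <= s.-1.
Proof.
apply/bigmax_leqP => j ne_j.
have : (j : nat) != s.-1 by apply: contra ne_j => /eqP <-; rewrite (tnth_nth false).
by have := ltn_ord j; lia.
Qed.

Lemma nth_tidx_tail s (e : s.-tuple bool) q :
  tidx e <= q < s -> nth false e q = nth false e s.-1.
Proof.
case/andP => le_q lt_q; apply/eqP; apply: contraLR le_q => ne_q; rewrite -ltnNge.
have := @leq_bigmax_cond _ (fun j : 'I_s => tnth e j != nth false e s.-1)
  (fun j : 'I_s => j.+1) (Ordinal lt_q).
by rewrite /= (tnth_nth false) => /(_ ne_q).
Qed.

Lemma Bset_block d s (e : s.-tuple bool) x q :
  x \in Bset d s e -> q < tidx e -> nth false x (d - 2 * s + 1 + q) = nth false e q.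
Proof.
rewrite inE => /andP [_ /existsP [a /andP [Aa /eqP x_a]]] lt_q.
have lt_q' : q < s.-1 by apply: leq_trans lt_q (tidx_le e).
rewrite -nth_drop x_a; move: Aa; rewrite inE => /forallP /(_ (Ordinal lt_q')) /=.
by rewrite lt_q => /eqP <-; rewrite (tnth_nth false).
Qed.

Lemma Bset_weight d s (e : s.-tuple bool) x :
  0 < weight e -> weight e < s -> x \in Bset d s e ->
  weight x = d %/ 2 - s + weight e.
Proof.
by move=> /lt0n_neq0 /negbTE e0 e_lt; rewrite !inE e0 e_lt => /andP [/eqP].
Qed.

Lemma Bset_dist_le d s (e g : s.-tuple bool) x y :
  ~~ odd d -> 2 * s <= d ->
  e != alpha s -> e != omega s -> g != alpha s -> g != omega s ->
  tidx e <= tidx g -> x \in Bset d s e -> y \in Bset d s g ->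
  dist x y <= minn (d - s - inner e g) (d - s - inner (compl e) (compl g)).
Proof.
move=> d_even le_2s_d ea eo ga go le_t Bx By.
have wx := Bset_weight (weight_gt0 ea) (weight_lt eo) Bx.
have wy := Bset_weight (weight_gt0 ga) (weight_lt go) By.
have d_half : d = 2 * (d %/ 2) by rewrite mulnC divnK // dvdn2.
have n_eq : d - s = 2 * (d %/ 2 - s) + s by lia.
have le_blk : d - 2 * s + 1 + tidx e <= d - s by have := tidx_le e; have := weight_lt eo; lia.
have le_ts : tidx e <= s by have := tidx_le e; lia.
have x_blk q : q < tidx e -> _ := Bset_block Bx.
have y_blk q (lt_q : q < tidx e) := Bset_block By (leq_trans lt_q le_t).
case: (boolP (nth false e s.-1)) => c.
  (* Complementing all four vectors keeps distances and the weight relations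
     and swaps the two inner products, so eps may be assumed to end in 0. *)
  suff : dist (compl x) (compl y) <= minn (d - s - inner (compl e) (compl g))
                (d - s - inner (compl (compl e)) (compl (compl g))).
    by rewrite dist_compl !complK minnC.
  apply: (dist_le_of_weights n_eq).
  - by have := weight_compl x; have := weight_compl e; lia.
  - by have := weight_compl y; have := weight_compl g; lia.
  apply: (inner_le_of_block le_blk le_ts) => q.
  - by move=> /[dup] /nth_tidx_tail e_q /andP [_ lt_q]; rewrite nth_compl // e_q c.
  - by move=> lt_q; rewrite !nth_compl ?x_blk //; lia.
  - by move=> lt_q; rewrite !nth_compl ?y_blk //; lia.
apply: (dist_le_of_weights n_eq wx wy).
apply: (inner_le_of_block le_blk le_ts _ x_blk y_blk) => q lt_q.
by rewrite nth_tidx_tail // (negbTE c).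
Qed.

Theorem lemma4 (d s : nat) (e g : s.-tuple bool) :
  0 < d -> ~~ odd d -> 0 < s -> 2 * s <= d ->
  e != alpha s -> e != omega s -> g != alpha s -> g != omega s ->
  diam (Bset d s e) (Bset d s g)
    <= minn (d - s - inner e g) (d - s - inner (compl e) (compl g)).
Proof.
move=> _ d_even _ le_2s_d ea eo ga go.
apply/bigmax_leqP => x Bx; apply/bigmax_leqP => y By.
have [le_t|/ltnW le_t] := leqP (tidx e) (tidx g); first exact: Bset_dist_le.
rewrite dist_sym inner_sym [inner (compl e) _]inner_sym.
exact: Bset_dist_le.
Qed.
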